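(* Define $i:({}^{\star}\mathbb{R}_{\mathcal F})_F\to\mathbb{R}_{\mathcal F}^{\circ}$ by $i([x]_{\mathcal F})=[x]_o$ and $j:{}^{\star}\mathbb{R}_{\mathcal F}\to{}^{\star}\mathbb{R}$ by $j([x]_{\mathcal F})=[x]_{\mathcal U}$. Then $i$ and $j$ are well-defined, surjective ring homomorphisms (hence non-trivial), and order-preserving in the sense that $[x]_{\mathcal F}\le_{\mathcal F}[y]_{\mathcal F}$ implies $i([x]_{\mathcal F})\le_o i([y]_{\mathcal F})$ (when both sides are defined) and $j([x]_{\mathcal F})\le_{\mathcal U} j([y]_{\mathcal F})$.
   Context: $\mathcal F$ is the Fréchet filter of cofinite subsets of $\mathbb{N}$, $\mathcal U\supseteq\mathcal F$ is a nonprincipal ultrafilter on $\mathbb{N}$. Henle's ring ${}^{\star}\mathbb{R}_{\mathcal F}=\mathbb{R}^{\mathbb{N}}/\mathcal F$: classes $[x]_{\mathcal F}$ of real sequences identified when equal on a set in $\mathcal F$, pointwise operations, $[x]_{\mathcal F}\le_{\mathcal F}[y]_{\mathcal F}$ iff $\{n:x_n\le y_n\}\in\mathcal F$. The hyperreal field ${}^{\star}\mathbb{R}=\mathbb{R}^{\mathbb{N}}/\mathcal U$ analogously with $\mathcal U$ in place of $\mathcal F$. $({}^{\star}\mathbb{R}_{\mathcal F})_F$ denotes the subring of finite elements of ${}^{\star}\mathbb{R}_{\mathcal F}$, i.e. those $r$ with $-n\le r\le n$ for some $n\in\mathbb{N}$ (equivalently classes of eventually bounded sequences). With $\mathbb{R}^{\mathbb{N}}_B$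 the ring of bounded real sequences and $o=\{f:\lim_{n\to\infty}nf(n)=0\}$, $\mathbb{R}_{\mathcal F}^{\circ}=\mathbb{R}^{\mathbb{N}}_B/o$ with pointwise operations and order $[x]_o\le_o[y]_o$ iff there exist $z\in o$ and $\bar n$ with $x_n\le y_n+z_n$ for all $n\ge\bar n$. *)

From Stdlib Require Import Reals Lra ClassicalEpsilon.
Open Scope R_scope.

Definition seqR := nat -> R.

Definition Quot (T : Type) (E : T -> T -> Prop) : Type :=
  {C : T -> Prop | exists x, C = E x}.

Definition cls {T : Type} (E : T -> T -> Prop) (x : T) : Quot T E :=
  exist _ (E x) (ex_intro _ x eq_refl).

Definition rep {T : Type} {E : T -> T -> Prop} (a : Quot T E) : T :=
  proj1_sig (constructive_indefinite_description _ (proj2_sig a)).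

Definition lift2 {T : Type} (E : T -> T -> Prop) (f : T -> T -> T)
  (a b : Quot T E) : Quot T E := cls E (f (rep a) (rep b)).

Definition leQ {T : Type} (E : T -> T -> Prop) (L : T -> T -> Prop)
  (a b : Quot T E) : Prop :=
  exists x y, a = cls E x /\ b = cls E y /\ L x y.

Definition sadd (x y : seqR) : seqR := fun n => x n + y n.
Definition smul (x y : seqR) : seqR := fun n => x n * y n.
Definition scst (c : R) : seqR := fun _ => c.

Definition cofinite (A : nat -> Prop) : Prop :=
  exists N : nat, forall n, ~ A n -> (n < N)%nat.

Definition is_ultrafilter (U : (nat -> Prop) -> Prop) : Prop :=
  (forall A B : nat -> Prop, U A -> (forall n, A n -> B n) -> U B) /\
  (forall A B : nat -> Prop, U A -> U B -> U (fun n => A n /\ B n)) /\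
  ~ U (fun _ => False) /\
  (forall A : nat -> Prop, U A \/ U (fun n => ~ A n)).

Definition nonprincipal (U : (nat -> Prop) -> Prop) : Prop :=
  forall k : nat, ~ U (fun n => n = k).

Definition eqF (x y : seqR) : Prop := cofinite (fun n => x n = y n).
Definition leF (x y : seqR) : Prop := cofinite (fun n => x n <= y n).
Definition RF := Quot seqR eqF.
Definition clsF (x : seqR) : RF := cls eqF x.
Definition addF : RF -> RF -> RF := lift2 eqF sadd.
Definition mulF : RF -> RF -> RF := lift2 eqF smul.
Definition oneF : RF := clsF (scst 1).
Definition leRF : RF -> RF -> Prop := leQ eqF leF.

Definition finiteF (r : RF) : Prop :=
  exists n : nat, leRF (clsF (scst (- INR n))) r /\ leRF r (clsF (scst (INR n))).

Definition eqU (U : (nat -> Prop) -> Prop) (x y : seqR) : Prop :=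
  U (fun n => x n = y n).
Definition leU (U : (nat -> Prop) -> Prop) (x y : seqR) : Prop :=
  U (fun n => x n <= y n).
Definition RU U := Quot seqR (eqU U).
Definition clsU U (x : seqR) : RU U := cls (eqU U) x.
Definition addU U : RU U -> RU U -> RU U := lift2 (eqU U) sadd.
Definition mulU U : RU U -> RU U -> RU U := lift2 (eqU U) smul.
Definition oneU U : RU U := clsU U (scst 1).
Definition leRU U : RU U -> RU U -> Prop := leQ (eqU U) (leU U).

Definition bounded (x : seqR) : Prop := exists M : R, forall n, Rabs (x n) <= M.
Definition BSeq := {x : seqR | bounded x}.

Lemma bounded_add x y : bounded x -> bounded y -> bounded (sadd x y).
Proof.
  intros [M HM] [K HK]; exists (M + K); intro n; unfold sadd.
  eapply Rle_trans; [apply Rabs_triang|]. specialize (HM n); specialize (HK n); lra.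
Qed.

Lemma bounded_mul x y : bounded x -> bounded y -> bounded (smul x y).
Proof.
  intros [M HM] [K HK]; exists (M * K); intro n; unfold smul.
  rewrite Rabs_mult. apply Rmult_le_compat; try apply Rabs_pos; auto.
Qed.

Lemma bounded_cst c : bounded (scst c).
Proof. exists (Rabs c); intro n; unfold scst; lra. Qed.

Definition baddB (x y : BSeq) : BSeq :=
  exist _ (sadd (proj1_sig x) (proj1_sig y))
    (bounded_add _ _ (proj2_sig x) (proj2_sig y)).
Definition bmulB (x y : BSeq) : BSeq :=
  exist _ (smul (proj1_sig x) (proj1_sig y))
    (bounded_mul _ _ (proj2_sig x) (proj2_sig y)).
Definition bcst (c : R) : BSeq := exist _ (scst c) (bounded_cst c).

Definition in_o (f : seqR) : Prop := Un_cv (fun n => INR n * f n) 0.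

Definition eqo (x y : BSeq) : Prop :=
  in_o (fun n => proj1_sig x n - proj1_sig y n).
Definition leo (x y : BSeq) : Prop :=
  exists z : seqR, in_o z /\
    exists N : nat, forall n, (N <= n)%nat -> proj1_sig x n <= proj1_sig y n + z n.
Definition Ro := Quot BSeq eqo.
Definition clso (x : BSeq) : Ro := cls eqo x.
Definition addo : Ro -> Ro -> Ro := lift2 eqo baddB.
Definition mulo : Ro -> Ro -> Ro := lift2 eqo bmulB.
Definition oneo : Ro := clso (bcst 1).
Definition leRo : Ro -> Ro -> Prop := leQ eqo leo.

(** i : ( *R_F)_F -> R°_F, [x]_F |-> [x]_o, computed on a bounded
    representative of the class (one exists when the class is finite);
    outside the finite elements the value is irrelevant. *)
Definition iF (a : RF) : Ro :=
  clso (epsilon (inhabits (bcst 0)) (fun y : BSeq => eqF (rep a) (proj1_sig y))).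

Definition jF U (a : RF) : RU U := clsU U (rep a).

From Stdlib Require Import Reals Lra Lia RelationClasses Morphisms.
From Stdlib Require Import ClassicalEpsilon FunctionalExtensionality PropExtensionality ProofIrrelevance.
From Coquelicot Require Import Coquelicot.
Open Scope R_scope.

(** All three rings are quotients of sequences with pointwise operations, so
    everything is checked on representatives.  Equality on a cofinite set
    implies equality along [U] (which contains the cofinite sets) and equality
    modulo [o] (an eventually vanishing sequence lies in [o]); since [o] is an
    ideal of the bounded sequences, the operations pass to [R°_F].  The finite
    elements of [*R_F] are exactly the classes of bounded sequences, because a
    sequence bounded from some index on is bounded.  Order preservation uses the
    same implications, with the correction [z = 0] for [<=_o]. *)

Section Quotient.

Context {T : Type} (E : T -> T -> Prop) `{Equivalence T E}.

Lemma rep_spec (a : Quot T E) : proj1_sig a = E (rep a).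
Proof.
  unfold rep. destruct (constructive_indefinite_description _ _) as [x Hx].
  exact Hx.
Qed.

Lemma cls_eq_iff (x y : T) : cls E x = cls E y <-> E x y.
Proof.
  split.
  - intros Hxy. apply (f_equal (@proj1_sig _ _)) in Hxy. simpl in Hxy.
    rewrite Hxy. reflexivity.
  - intros Hxy. apply eq_sig_hprop; [intros; apply proof_irrelevance|]. simpl.
    extensionality z. apply propositional_extensionality.
    split; intros; [symmetry in Hxy|]; etransitivity; eassumption.
Qed.

Lemma cls_rep (a : Quot T E) : cls E (rep a) = a.
Proof.
  apply eq_sig_hprop; [intros; apply proof_irrelevance|]. simpl.
  symmetry. apply rep_spec.
Qed.

Lemma cls_surjective (a : Quot T E) : exists x, a = cls E x.
Proof. exists (rep a). symmetry. apply cls_rep. Qed.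

Lemma rep_cls (x : T) : E (rep (cls E x)) x.
Proof. apply cls_eq_iff. apply cls_rep. Qed.

Lemma lift2_cls (f : T -> T -> T) :
  Proper (E ==> E ==> E) f ->
  forall x y, lift2 E f (cls E x) (cls E y) = cls E (f x y).
Proof. intros Hf x y. apply cls_eq_iff. apply Hf; apply rep_cls. Qed.

Lemma leQ_cls (L : T -> T -> Prop) :
  Proper (E ==> E ==> iff) L ->
  forall x y, leQ E L (cls E x) (cls E y) <-> L x y.
Proof.
  intros HL x y. split.
  - intros (x' & y' & Hx & Hy & Hxy).
    apply cls_eq_iff in Hx, Hy. now rewrite Hx, Hy.
  - intros Hxy. now exists x, y.
Qed.

End Quotient.

(* [eqF], [leF], [eqU U] and [leU U] are convertible to [along F eq] and
   [along F Rle] for [F = cofinite] and [F = U]. *)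
Definition along (F : (nat -> Prop) -> Prop) (P : R -> R -> Prop) (x y : seqR) : Prop :=
  F (fun n => P (x n) (y n)).

Section Along.

Context (F : (nat -> Prop) -> Prop) `{Filter nat F}.

Lemma along_eq_compat (P : R -> R -> Prop) x x' y y' :
  along F eq x x' -> along F eq y y' -> along F P x y -> along F P x' y'.
Proof.
  intros Hx Hy Hxy. unfold along in *.
  apply (filter_imp (fun n => (x n = x' n /\ y n = y' n) /\ P (x n) (y n))).
  - intros n [[<- <-] HP]. exact HP.
  - now apply filter_and; [apply filter_and|].
Qed.

Global Instance along_eq_Equivalence : Equivalence (along F eq).
Proof.
  assert (Hrefl : Reflexive (along F eq)) by (intros x; unfold along; now apply filter_forall).
  split.
  - exact Hrefl.
  - intros x y Hxy. now apply (along_eq_compat eq x y x x).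
  - intros x y z Hxy Hyz. now apply (along_eq_compat eq x x y z).
Qed.

Lemma along_Proper (P : R -> R -> Prop) :
  Proper (along F eq ==> along F eq ==> iff) (along F P).
Proof.
  intros x x' Hx y y' Hy.
  split; apply along_eq_compat; easy || now symmetry.
Qed.

Lemma along_pointwise_Proper (f : R -> R -> R) :
  Proper (along F eq ==> along F eq ==> along F eq) (fun x y n => f (x n) (y n)).
Proof.
  intros x x' Hx y y' Hy. unfold along in *.
  apply (filter_imp (fun n => x n = x' n /\ y n = y' n)).
  - now intros n [-> ->].
  - now apply filter_and.
Qed.

End Along.

Lemma cofinite_eventually (A : nat -> Prop) : cofinite A <-> eventually A.
Proof.
  split.
  - intros [N HN]. exists N. intros n Hn.
    apply NNPP. intros HA. specialize (HN n HA). lia.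
  - intros [N HN]. exists N. intros n HA.
    destruct (Nat.lt_ge_cases n N) as [Hlt | Hge]; [exact Hlt|].
    now elim HA; apply HN.
Qed.

Global Instance cofinite_Filter : Filter cofinite.
Proof.
  constructor.
  - apply cofinite_eventually, filter_true.
  - intros P Q HP HQ. apply cofinite_eventually in HP, HQ.
    now apply cofinite_eventually, filter_and.
  - intros P Q HPQ HP. apply cofinite_eventually in HP.
    now apply cofinite_eventually, (filter_imp P).
Qed.

Lemma ultrafilter_Filter (U : (nat -> Prop) -> Prop) : is_ultrafilter U -> Filter U.
Proof.
  intros (Himp & Hand & Hnot_empty & Hcompl). constructor.
  - destruct (Hcompl (fun _ => True)) as [Htrue | Hfalse]; [exact Htrue|].
    elim Hnot_empty. apply (Himp _ _ Hfalse). now intros n Hn.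
  - exact Hand.
  - intros P Q HPQ HP. exact (Himp P Q HP HPQ).
Qed.

Global Instance eqF_Equivalence : Equivalence eqF := along_eq_Equivalence cofinite.

Lemma addF_clsF (x y : seqR) : addF (clsF x) (clsF y) = clsF (sadd x y).
Proof. exact (lift2_cls eqF sadd (along_pointwise_Proper cofinite Rplus) x y). Qed.

Lemma mulF_clsF (x y : seqR) : mulF (clsF x) (clsF y) = clsF (smul x y).
Proof. exact (lift2_cls eqF smul (along_pointwise_Proper cofinite Rmult) x y). Qed.

Lemma leRF_clsF (x y : seqR) : leRF (clsF x) (clsF y) <-> leF x y.
Proof. exact (leQ_cls eqF leF (along_Proper cofinite Rle) x y). Qed.

Section Hyperreals.

Variable U : (nat -> Prop) -> Prop.
Hypothesis hU : is_ultrafilter U.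

#[local] Instance U_Filter : Filter U := ultrafilter_Filter U hU.

Lemma eqU_Equivalence : Equivalence (eqU U).
Proof. exact (along_eq_Equivalence U). Qed.

#[local] Existing Instance eqU_Equivalence.

Lemma addU_clsU (x y : seqR) : addU U (clsU U x) (clsU U y) = clsU U (sadd x y).
Proof. exact (lift2_cls (eqU U) sadd (along_pointwise_Proper U Rplus) x y). Qed.

Lemma mulU_clsU (x y : seqR) : mulU U (clsU U x) (clsU U y) = clsU U (smul x y).
Proof. exact (lift2_cls (eqU U) smul (along_pointwise_Proper U Rmult) x y). Qed.

Lemma leRU_clsU (x y : seqR) : leRU U (clsU U x) (clsU U y) <-> leU U x y.
Proof. exact (leQ_cls (eqU U) (leU U) (along_Proper U Rle) x y). Qed.

Hypothesis hF : forall A, cofinite A -> U A.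

Lemma jF_clsF (x : seqR) : jF U (clsF x) = clsU U x.
Proof. apply (cls_eq_iff (eqU U)), hF, (rep_cls eqF). Qed.

End Hyperreals.

Lemma in_o_is_lim_seq (f : seqR) : in_o f <-> is_lim_seq (fun n => INR n * f n) 0.
Proof. symmetry. apply is_lim_seq_Reals. Qed.

Lemma in_o_eventually_zero (f : seqR) : eventually (fun n => f n = 0) -> in_o f.
Proof.
  intros Hf. apply in_o_is_lim_seq.
  apply (is_lim_seq_ext_loc (fun _ => 0)); [|apply is_lim_seq_const].
  apply (filter_imp (fun n => f n = 0)); [intros n ->; ring | exact Hf].
Qed.

Lemma in_o_add (f g : seqR) : in_o f -> in_o g -> in_o (fun n => f n + g n).
Proof.
  rewrite !in_o_is_lim_seq. intros Hf Hg.
  pose proof (is_lim_seq_plus' _ _ _ _ Hf Hg) as Hfg. rewrite Rplus_0_r in Hfg.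
  apply (is_lim_seq_ext _ _ _ (fun n => eq_sym (Rmult_plus_distr_l _ _ _)) Hfg).
Qed.

Lemma in_o_bounded_mul (b f : seqR) : bounded b -> in_o f -> in_o (fun n => b n * f n).
Proof.
  intros [M HM] Hf. apply in_o_is_lim_seq, is_lim_seq_abs_0 in Hf.
  apply in_o_is_lim_seq, is_lim_seq_abs_0.
  apply (is_lim_seq_le_le (fun _ => 0) _ (fun n => M * Rabs (INR n * f n))).
  - intros n. split; [apply Rabs_pos|].
    replace (INR n * (b n * f n)) with (b n * (INR n * f n)) by ring.
    rewrite Rabs_mult. apply Rmult_le_compat_r; [apply Rabs_pos | apply HM].
  - apply is_lim_seq_const.
  - replace (Finite 0) with (Rbar_mult M 0) by (simpl; f_equal; ring).
    now apply is_lim_seq_scal_l.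
Qed.

Lemma in_o_opp (f : seqR) : in_o f -> in_o (fun n => - f n).
Proof.
  intros Hf. replace (fun n => - f n) with (fun n => scst (-1) n * f n).
  - apply in_o_bounded_mul; [apply bounded_cst | exact Hf].
  - extensionality n. unfold scst. ring.
Qed.

Global Instance eqo_Equivalence : Equivalence eqo.
Proof.
  unfold eqo. split.
  - intros x. apply in_o_eventually_zero, filter_forall. intros n. ring.
  - intros x y Hxy. apply in_o_opp in Hxy.
    replace (fun n => proj1_sig y n - proj1_sig x n)
      with (fun n => - (proj1_sig x n - proj1_sig y n)); [exact Hxy|].
    extensionality n. ring.
  - intros x y z Hxy Hyz. pose proof (in_o_add _ _ Hxy Hyz) as Hxz.
    replace (fun n => proj1_sig x n - proj1_sig z n)
      with (fun n => (proj1_sig x n - proj1_sig y n) + (proj1_sig y n - proj1_sig z n));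
      [exact Hxz|].
    extensionality n. ring.
Qed.

Lemma addo_clso (x y : BSeq) : addo (clso x) (clso y) = clso (baddB x y).
Proof.
  apply (lift2_cls eqo). intros a a' Ha b b' Hb. unfold eqo in *. simpl. unfold sadd.
  replace (fun n => proj1_sig a n + proj1_sig b n - (proj1_sig a' n + proj1_sig b' n))
    with (fun n => (proj1_sig a n - proj1_sig a' n) + (proj1_sig b n - proj1_sig b' n));
    [now apply in_o_add|].
  extensionality n. ring.
Qed.

Lemma mulo_clso (x y : BSeq) : mulo (clso x) (clso y) = clso (bmulB x y).
Proof.
  apply (lift2_cls eqo). intros a a' Ha b b' Hb. unfold eqo in *. simpl. unfold smul.
  replace (fun n => proj1_sig a n * proj1_sig b n - proj1_sig a' n * proj1_sig b' n)
    with (fun n => proj1_sig b n * (proj1_sig a n - proj1_sig a' n)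
                   + proj1_sig a' n * (proj1_sig b n - proj1_sig b' n)).
  - apply in_o_add; apply in_o_bounded_mul; try apply proj2_sig; assumption.
  - extensionality n. ring.
Qed.

Lemma eqF_eqo (x y : BSeq) : eqF (proj1_sig x) (proj1_sig y) -> eqo x y.
Proof.
  intros Hxy. apply cofinite_eventually in Hxy.
  apply in_o_eventually_zero, (filter_imp _ _ (fun n Hn => Rminus_diag_eq _ _ Hn) Hxy).
Qed.

Lemma leF_leo (x y : BSeq) : leF (proj1_sig x) (proj1_sig y) -> leo x y.
Proof.
  intros Hxy. apply cofinite_eventually in Hxy as [N HN].
  exists (fun _ => 0). split.
  - apply in_o_eventually_zero, filter_forall. reflexivity.
  - exists N. intros n Hn. rewrite Rplus_0_r. now apply HN.
Qed.

Lemma bounded_of_eventually (x : seqR) (M : R) :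
  eventually (fun n => Rabs (x n) <= M) -> bounded x.
Proof.
  intros [N HN]. revert M HN. induction N as [|N IH]; intros M HN.
  - exists M. intros n. apply HN. lia.
  - apply (IH (Rmax M (Rabs (x N)))). intros n Hn.
    destruct (Nat.eq_dec n N) as [-> | Hne]; [apply Rmax_r|].
    eapply Rle_trans; [apply HN; lia | apply Rmax_l].
Qed.

Lemma finiteF_clsF (x : seqR) : finiteF (clsF x) <-> bounded x.
Proof.
  split.
  - intros (n & Hlo & Hhi). apply leRF_clsF, cofinite_eventually in Hlo, Hhi.
    apply (bounded_of_eventually x (INR n)).
    apply (filter_imp _ _ (fun k Hk => proj2 (Rabs_le_between (x k) (INR n)) Hk)).
    unfold scst in *. now apply filter_and.
  - intros [M HM]. destruct (INR_archimed 1 M) as [n Hn]; [lra|].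
    exists n. split; apply leRF_clsF, cofinite_eventually, filter_forall;
      intros k; specialize (HM k); apply Rabs_le_between in HM; unfold scst; lra.
Qed.

Lemma finiteF_bounded_rep (a : RF) : finiteF a -> exists x : BSeq, a = clsF (proj1_sig x).
Proof.
  destruct (cls_surjective eqF a) as [x ->]. intros Hx.
  now exists (exist _ x (proj1 (finiteF_clsF x) Hx)).
Qed.

Lemma iF_clsF (x : BSeq) : iF (clsF (proj1_sig x)) = clso x.
Proof.
  unfold iF. set (y := epsilon _ _).
  assert (Hy : eqF (rep (clsF (proj1_sig x))) (proj1_sig y)).
  { apply epsilon_spec. exists x. apply (rep_cls eqF). }
  apply (cls_eq_iff eqo), eqF_eqo.
  transitivity (rep (clsF (proj1_sig x))); [now symmetry | apply (rep_cls eqF)].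
Qed.

Theorem mainTheorem5 (U : (nat -> Prop) -> Prop)
  (hU : is_ultrafilter U) (hnp : nonprincipal U)
  (hF : forall A, cofinite A -> U A) :
  (* well-definedness: i([x]_F) = [x]_o and j([x]_F) = [x]_U *)
  (forall x y : BSeq, eqF (proj1_sig x) (proj1_sig y) -> eqo x y) /\
  (forall x : BSeq, finiteF (clsF (proj1_sig x)) /\ iF (clsF (proj1_sig x)) = clso x) /\
  (forall x y : seqR, eqF x y -> eqU U x y) /\
  (forall x : seqR, jF U (clsF x) = clsU U x) /\
  (* i is a ring homomorphism on the finite elements *)
  (forall a b, finiteF a -> finiteF b ->
     finiteF (addF a b) /\ finiteF (mulF a b) /\
     iF (addF a b) = addo (iF a) (iF b) /\ iF (mulF a b) = mulo (iF a) (iF b)) /\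
  finiteF oneF /\ iF oneF = oneo /\
  (* j is a ring homomorphism *)
  (forall a b, jF U (addF a b) = addU U (jF U a) (jF U b) /\
               jF U (mulF a b) = mulU U (jF U a) (jF U b)) /\
  jF U oneF = oneU U /\
  (* surjectivity *)
  (forall c : Ro, exists a, finiteF a /\ iF a = c) /\
  (forall c : RU U, exists a, jF U a = c) /\
  (* order preservation *)
  (forall a b, finiteF a -> finiteF b -> leRF a b -> leRo (iF a) (iF b)) /\
  (forall a b, leRF a b -> leRU U (jF U a) (jF U b)).
Proof.
  pose proof (eqU_Equivalence U hU) as HeqU.
  split; [exact eqF_eqo|].
  split; [intros x; split; [apply finiteF_clsF, proj2_sig | apply iF_clsF]|].
  split; [intros x y; apply hF|].
  split; [exact (jF_clsF U hU hF)|].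
  split.
  { intros a b Ha Hb.
    destruct (finiteF_bounded_rep a Ha) as [x ->], (finiteF_bounded_rep b Hb) as [y ->].
    rewrite addF_clsF, mulF_clsF.
    change (sadd (proj1_sig x) (proj1_sig y)) with (proj1_sig (baddB x y)).
    change (smul (proj1_sig x) (proj1_sig y)) with (proj1_sig (bmulB x y)).
    rewrite !iF_clsF, addo_clso, mulo_clso, !finiteF_clsF.
    now repeat split; apply proj2_sig. }
  split; [apply finiteF_clsF, bounded_cst|].
  split; [exact (iF_clsF (bcst 1))|].
  split.
  { intros a b.
    destruct (cls_surjective eqF a) as [x ->], (cls_surjective eqF b) as [y ->].
    rewrite addF_clsF, mulF_clsF, !(jF_clsF U hU hF), (addU_clsU U hU), (mulU_clsU U hU).
    now split. }
  split; [apply (jF_clsF U hU hF)|].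
  split.
  { intros c. destruct (cls_surjective eqo c) as [x ->].
    exists (clsF (proj1_sig x)). split; [apply finiteF_clsF, proj2_sig | apply iF_clsF]. }
  split.
  { intros c. destruct (cls_surjective (eqU U) c) as [x ->].
    exists (clsF x). apply (jF_clsF U hU hF). }
  split.
  { intros a b Ha Hb.
    destruct (finiteF_bounded_rep a Ha) as [x ->], (finiteF_bounded_rep b Hb) as [y ->].
    rewrite leRF_clsF, !iF_clsF. intros Hxy. exists x, y. now split; [|split; [|apply leF_leo]]. }
  { intros a b.
    destruct (cls_surjective eqF a) as [x ->], (cls_surjective eqF b) as [y ->].
    rewrite leRF_clsF, !(jF_clsF U hU hF), (leRU_clsU U hU). apply hF. }
Qed.
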